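(* Let a Lie group with Lie algebra $\mathfrak g$ act on a manifold $N$, with induced action $\xi\triangleright f$ of $\xi\in\mathfrak g$ on $f\in C^\infty(N)$, choose a basis $\{e_i\}$ of $\mathfrak g$ with dual basis $\{e^i\}$, and define derivations of $C^\infty(N)\otimes S(\mathfrak g)$ by $\check e_i(v)=[e_i,v]$, $\check e_i(f)=0$; $\check e^i(v)=e^i(v)$, $\check e^i(f)=0$; $\check c_i(v)=0$, $\check c_i(f)=e_i\triangleright f$. Let $\sum X\otimes Y=-\sum_i(\check c_i+\check e_i/2)\otimes\check e^i$ and define, for functions $a$ and $1$-forms $\xi$, $$\hat\nabla_a\xi=\sum\big(X(a)\,\mathcal L_Y\xi-Y(a)\,\mathcal L_X\xi\big)$$ ($\mathcal L$ the Lie derivative). Then for $v,w\in\mathfrak g$ and $f,h\in C^\infty(N)$: $$\hat\nabla_v{\rm d}w=\tfrac12{\rm d}[v,w],\quad \hat\nabla_v{\rm d}h={\rm d}(v\triangleright h),\quad \hat\nabla_f{\rm d}w=0,\quad\hat\nabla_f{\rm d}h=0.$$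
   Context: $\hat\nabla$ is the preconnection induced by a cochain twist $F^{-1}=1\otimes1+\hbar\sum X\otimes Y+O(\hbar^2)$: with $a\bullet\xi=(F^{-(1)}\triangleright a)(F^{-(2)}\triangleright\xi)$ (vector fields acting by Lie derivative), $a\bullet\xi-\xi\bullet a=\hbar\hat\nabla_a\xi+O(\hbar^2)$. Here $v\in\mathfrak g$ are viewed as linear functions on $\mathfrak g^*$, so these are objects on $N\times\mathfrak g^*$. *)

From HB Require Import structures.
From mathcomp Require Import all_boot all_order all_algebra.
Set Implicit Arguments. Unset Strict Implicit. Unset Printing Implicit Defensive.
Import Order.TTheory GRing.Theory Num.Theory.
Local Open Scope ring_scope.

Section Defs.
Variable R : realFieldType.

(* A finite-dimensional Lie algebra g, written in a chosen basis:
   g = 'rV[R]_n, e_i = delta_mx 0 i, and e^i(v) = v 0 i. *)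
Definition lie_bracket (n : nat) (br : 'rV[R]_n -> 'rV[R]_n -> 'rV[R]_n) :=
  [/\ forall a u v w, br (a *: u + v) w = a *: br u w + br v w,
      forall a u v w, br u (a *: v + w) = a *: br u v + br u w,
      forall v, br v v = 0
    & forall u v w, br u (br v w) + br v (br w u) + br w (br u v) = 0].

Definition basis_vec (n : nat) (i : 'I_n) : 'rV[R]_n := delta_mx 0 i.
Definition dual_coord (n : nat) (i : 'I_n) (v : 'rV[R]_n) : R := v 0 i.

(* R-linear derivations of a commutative R-algebra (= vector fields when the
   algebra is an algebra of smooth functions). *)
Definition derivation (C : comAlgType R) (D : C -> C) :=
  [/\ forall a b, D (a + b) = D a + D b,
      forall (r : R) a, D (r *: a) = r *: D a
    & forall a b, D (a * b) = D a * b + a * D b].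

(* R-algebra morphisms (e.g. pullback of functions along N x g^* -> N). *)
Definition alg_morph (A C : comAlgType R) (p : A -> C) :=
  [/\ forall a b, p (a + b) = p a + p b,
      forall (r : R) a, p (r *: a) = r *: p a,
      forall a b, p (a * b) = p a * p b
    & p 1 = 1].

Definition lie_action (n : nat) (br : 'rV[R]_n -> 'rV[R]_n -> 'rV[R]_n)
  (A : comAlgType R) (act : 'rV[R]_n -> A -> A) :=
  [/\ forall a u v f, act (a *: u + v) f = a *: act u f + act v f,
      forall v, derivation (act v)
    & forall u v f, act u (act v f) - act v (act u f) = act (br u v) f].

(* Kaehler-type de Rham differential d : C -> Omega^1, Omega^1 a C-module
   generated by exact forms (as the smooth 1-forms are). *)
Definition differential (C : comAlgType R) (Om : lmodType C) (d : C -> Om) :=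
  [/\ forall a b, d (a + b) = d a + d b,
      forall (r : R) a, d (r *: a) = (r%:A : C) *: d a,
      forall a b, d (a * b) = a *: d b + b *: d a
    & forall om : Om, exists s : seq (C * C), om = \sum_(p <- s) p.1 *: d p.2].

Definition lie_derivative (C : comAlgType R) (Om : lmodType C) (d : C -> Om)
  (L : (C -> C) -> Om -> Om) :=
  forall D, derivation D ->
  [/\ forall c, L D (d c) = d (D c),
      forall om1 om2, L D (om1 + om2) = L D om1 + L D om2
    & forall c om, L D (c *: om) = D c *: om + c *: L D om].

Definition hat_nabla (n : nat) (C : comAlgType R) (Om : lmodType C)
  (L : (C -> C) -> Om -> Om) (X Y : 'I_n -> C -> C) (a : C) (xi : Om) : Om :=
  \sum_(i < n) (X i a *: L (Y i) xi - Y i a *: L (X i) xi).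

Definition XX (n : nat) (C : comAlgType R) (ce cc : 'I_n -> C -> C) :
  'I_n -> C -> C := fun i c => - (cc i c + (2^-1 : R) *: ce i c).
Definition YY (n : nat) (C : comAlgType R) (cd : 'I_n -> C -> C) :
  'I_n -> C -> C := cd.

End Defs.

(** On exact forms the Lie derivative along a derivation commutes with [d], so
    [hat_nabla_a (d b) = sum_i (X_i(a) d(Y_i b) - Y_i(a) d(X_i b))].  Since
    [Y_i = e^i] sends both [w] and [h] to constants, the first term vanishes;
    since it kills [f], so does [hat_nabla_f].  For [a = v] what remains is
    [sum_i v^i d(c_i b + e_i b / 2)], and expanding [v = sum_i v^i e_i] in the
    bracket, resp. the action, gives the two remaining identities. *)
From mathcomp Require Import all_boot all_order all_algebra.
Set Implicit Arguments.
Unset Strict Implicit.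
Unset Printing Implicit Defensive.
Import Order.TTheory GRing.Theory Num.Theory.
Local Open Scope ring_scope.

Section AdditiveMaps.
Variables (U V : zmodType) (f : U -> V).
Hypothesis fD : {morph f : a b / a + b}.

Lemma morph_add0 : f 0 = 0.
Proof. by apply: (addrI (f 0)); rewrite -fD !addr0. Qed.

Lemma morph_addN : {morph f : a / - a}.
Proof. by move=> a; apply: (addrI (f a)); rewrite -fD !subrr morph_add0. Qed.

Lemma morph_add_sum (I : Type) (r : seq I) (F : I -> U) :
  f (\sum_(i <- r) F i) = \sum_(i <- r) f (F i).
Proof. exact: (big_morph f fD morph_add0). Qed.

End AdditiveMaps.

Lemma linear_coord_sum (R : realFieldType) (n : nat) (V : lmodType R)
    (f : 'rV[R]_n -> V) :
  (forall (a : R) u v, f (a *: u + v) = a *: f u + f v) ->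
  forall v, f v = \sum_(i < n) dual_coord i v *: f (basis_vec R i).
Proof.
move=> fL; have fD : {morph f : u v / u + v}.
  by move=> u v; have := fL 1 u v; rewrite !scale1r.
have fZ (a : R) u : f (a *: u) = a *: f u.
  by rewrite -[a *: u]addr0 fL (morph_add0 fD) addr0.
move=> v; rewrite [in LHS](row_sum_delta v) (morph_add_sum fD).
by apply: eq_bigr => i _; rewrite fZ.
Qed.

Section Derivations.
Variables (R : realFieldType) (C : comAlgType R).
Implicit Types D : C -> C.

Lemma derivationD D1 D2 :
  derivation D1 -> derivation D2 -> derivation (fun c => D1 c + D2 c).
Proof.
move=> [D1D D1Z D1M] [D2D D2Z D2M]; split=> [a b|r a|a b].
- by rewrite D1D D2D addrACA.
- by rewrite D1Z D2Z scalerDr.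
- by rewrite D1M D2M mulrDl mulrDr addrACA.
Qed.

Lemma derivationZ (r : R) D : derivation D -> derivation (fun c => r *: D c).
Proof.
move=> [DD DZ DM]; split=> [a b|s a|a b].
- by rewrite DD scalerDr.
- by rewrite DZ !scalerA mulrC.
- by rewrite DM scalerDr scalerAl scalerAr.
Qed.

Lemma derivationN D : derivation D -> derivation (fun c => - D c).
Proof.
move=> [DD DZ DM]; split=> [a b|r a|a b].
- by rewrite DD opprD.
- by rewrite DZ scalerN.
- by rewrite DM opprD mulNr mulrN.
Qed.

End Derivations.

Section Differential.
Variables (R : realFieldType) (C : comAlgType R).
Variables (Om : lmodType C) (d : C -> Om).
Hypothesis dd : differential d.

Let dD : {morph d : a b / a + b}. Proof. by case: dd. Qed.

Lemma differential0 : d 0 = 0.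
Proof. exact: morph_add0 dD. Qed.

Lemma differentialN a : d (- a) = - d a.
Proof. exact: morph_addN dD a. Qed.

Lemma differential_scalar (r : R) : d (r%:A) = 0.
Proof.
have [_ dZ dM _] := dd.
have d1 : d 1 = 0.
  have d11 := dM 1 1; rewrite mulr1 scale1r in d11.
  by apply: (addrI (d 1)); rewrite addr0 -d11.
by rewrite dZ d1 scaler0.
Qed.

Lemma differential_sumZ (I : Type) (r : seq I) (a : I -> R) (x : I -> C) :
  d (\sum_(i <- r) a i *: x i) = \sum_(i <- r) (a i)%:A *: d (x i).
Proof.
have [_ dZ _ _] := dd.
by rewrite (morph_add_sum dD); apply: eq_bigr => i _; rewrite dZ.
Qed.

End Differential.

Lemma hat_nabla_exact (R : realFieldType) (n : nat) (C : comAlgType R)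
    (Om : lmodType C) (d : C -> Om) (L : (C -> C) -> Om -> Om)
    (X Y : 'I_n -> C -> C) (a b : C) :
  lie_derivative d L ->
  (forall i, derivation (X i)) -> (forall i, derivation (Y i)) ->
  (forall i, d (Y i b) = 0) ->
  hat_nabla L X Y a (d b) = - \sum_(i < n) Y i a *: d (X i b).
Proof.
move=> dL DX DY dYb; rewrite /hat_nabla -sumrN.
apply: eq_bigr => i _.
have [LXd _ _] := dL _ (DX i); have [LYd _ _] := dL _ (DY i).
by rewrite LXd LYd dYb scaler0 sub0r.
Qed.

Theorem proposition6p1p3
  (R : realFieldType) (n : nat) (br : 'rV[R]_n -> 'rV[R]_n -> 'rV[R]_n)
  (A : comAlgType R) (act : 'rV[R]_n -> A -> A)
  (C : comAlgType R) (pull : A -> C) (lin : 'rV[R]_n -> C)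
  (Om : lmodType C) (d : C -> Om) (L : (C -> C) -> Om -> Om)
  (ce cd cc : 'I_n -> C -> C) :
  lie_bracket br ->
  lie_action br act ->
  alg_morph pull ->
  (forall (a : R) u v, lin (a *: u + v) = a *: lin u + lin v) ->
  differential d ->
  lie_derivative d L ->
  (forall i, derivation (ce i)) ->
  (forall i, derivation (cd i)) ->
  (forall i, derivation (cc i)) ->
  (forall i v, ce i (lin v) = lin (br (@basis_vec R n i) v)) ->
  (forall i f, ce i (pull f) = 0) ->
  (forall i v, cd i (lin v) = (@dual_coord R n i v)%:A) ->
  (forall i f, cd i (pull f) = 0) ->
  (forall i v, cc i (lin v) = 0) ->
  (forall i f, cc i (pull f) = pull (act (@basis_vec R n i) f)) ->
  let nabla := hat_nabla L (XX ce cc) (YY cd) in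
  [/\ forall v w, nabla (lin v) (d (lin w)) = ((2^-1 : R)%:A : C) *: d (lin (br v w)),
      forall v h, nabla (lin v) (d (pull h)) = d (pull (act v h)),
      forall f w, nabla (pull f) (d (lin w)) = 0
    & forall f h, nabla (pull f) (d (pull h)) = 0].
Proof.
move=> [brL _ _ _] [actL _ _] [pullD pullZ _ _] linL dd dL Dce Dcd Dcc
  ceL ceP cdL cdP ccL ccP nabla.
have [_ dZ _ _] := dd.
have DX i : derivation (XX ce cc i).
  exact: derivationN (derivationD (Dcc i) (derivationZ 2^-1 (Dce i))).
have nabla_exact b a : (forall i, d (cd i b) = 0) ->
    nabla a (d b) = - \sum_(i < n) cd i a *: d (XX ce cc i b).
  by move=> dYb; apply: hat_nabla_exact.
have nabla_pull f b : (forall i, d (cd i b) = 0) -> nabla (pull f) (d b) = 0.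
  move=> dYb; rewrite nabla_exact // big1 ?oppr0 // => i _.
  by rewrite cdP scale0r.
have dY_lin w i : d (cd i (lin w)) = 0 by rewrite cdL differential_scalar.
have dY_pull h i : d (cd i (pull h)) = 0 by rewrite cdP differential0.
have br_expand v w :
    lin (br v w) = \sum_(i < n) dual_coord i v *: lin (br (basis_vec R i) w).
  by apply: (linear_coord_sum (f := fun u => lin (br u w))) => a u u';
    rewrite brL linL.
have act_expand v h :
    pull (act v h) =
    \sum_(i < n) dual_coord i v *: pull (act (basis_vec R i) h).
  by apply: (linear_coord_sum (f := fun u => pull (act u h))) => a u u';
    rewrite actL pullD pullZ.
split=> [v w|v h|f w|f h].
- rewrite nabla_exact // br_expand differential_sumZ // scaler_sumr -sumrN.
  apply: eq_bigr => i _; rewrite cdL /XX ccL ceL add0r differentialN // dZ.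
  by rewrite scalerN opprK !scalerA mulrC.
- rewrite nabla_exact // act_expand differential_sumZ // -sumrN.
  apply: eq_bigr => i _; rewrite cdL /XX ccP ceP scaler0 addr0.
  by rewrite differentialN // scalerN opprK.
- exact: nabla_pull (dY_lin w).
- exact: nabla_pull (dY_pull h).
Qed.
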